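(* Let $P_S,H_{SR},H_{SD},H_{RD},\sigma_R^2,\sigma_D^2>0$ and $\eta\in(0,1]$. Set $C_{SR}=\log(1+P_SH_{SR}/\sigma_R^2)$, $C_{SD}=\log(1+P_SH_{SD}/\sigma_D^2)$, $a=C_{SR}-C_{SD}$, $b=C_{SD}$, $c=\eta H_{SR}H_{RD}P_S/\sigma_D^2$, and assume $a>0$. Let $$f_1(\lambda)=\lambda b+(1-\lambda)\Big(b+\log\Big(1+\frac{c\lambda}{1-\lambda}\Big)\Big),\quad \lambda\in(0,1),$$ and consider the problem $\max_{\lambda\in(0,1)}\min\{\lambda C_{SR},\,f_1(\lambda)\}$. Then: (i) the equation $\lambda C_{SR}=f_1(\lambda)$ has exactly one solution $\lambda_1\in(0,1)$, namely $$\lambda_1=\frac{-\frac{1}{a}\mathcal W_{-1}\!\big(-\frac{a}{c}e^{-b-\frac{a}{c}}\big)-\frac1c}{1-\frac{1}{a}\mathcal W_{-1}\!\big(-\frac{a}{c}e^{-b-\frac{a}{c}}\big)-\frac1c};$$ (ii) $f_1$ has exactly one stationary point $\lambda_2\in(0,1)$, namely $$\lambda_2=\frac{e^{\mathcal W_0(\frac{c-1}{e})+1}-1}{e^{\mathcal W_0(\frac{c-1}{e})+1}+c-1};$$ (iii) $\lambda^*=\max\{\lambda_1,\lambda_2\}$ attains the maximum of $\min\{\lambda C_{SR},f_1(\lambda)\}$ over $\lambda\in(0,1)$.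
   Context: $\log$ is the natural logarithm. $\mathcal W_0$ and $\mathcal W_{-1}$ denote the principal and the lower real branches of the Lambert W function (the real solutions $w$ of $we^w=x$ with $w\ge -1$ and $w\le -1$, respectively, for $x\ge -1/e$, resp. $x\in[-1/e,0)$). This is the optimal time-fraction problem for the ''ideal'' energy-harvesting relay protocol with mutual-information accumulation at the destination: $\lambda$ is the fraction of time the source broadcasts before the relay decodes, the relay forwarding power is $\eta H_{SR}P_S\lambda/(1-\lambda)$, and the achievable rate is $\min\{\lambda C_{SR},\lambda C_{SD}+(1-\lambda)J\}$ with $J=C_{SD}+\log(1+P_RH_{RD}/\sigma_D^2)$, which equals $f_1(\lambda)$ in the second term. *)

From Stdlib Require Import Reals ClassicalEpsilon.
Open Scope R_scope.

(* Principal real branch of Lambert W: the real w >= -1 with w e^w = x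
   (meaningful for x >= -1/e; an arbitrary value otherwise). *)
Definition W0 (x : R) : R :=
  epsilon (inhabits 0) (fun w => -1 <= w /\ w * exp w = x).

(* Lower real branch of Lambert W: the real w <= -1 with w e^w = x
   (meaningful for -1/e <= x < 0; an arbitrary value otherwise). *)
Definition Wm1 (x : R) : R :=
  epsilon (inhabits 0) (fun w => w <= -1 /\ w * exp w = x).

Definition f1 (b c lam : R) : R :=
  lam * b + (1 - lam) * (b + ln (1 + c * lam / (1 - lam))).

(* In the odds y = lam / (1 - lam) one has
   lam CSR - f1 lam = (1 - lam) (a y - b - ln (1 + c y)), and the substitution
   w = -(a/c)(1 + c y) turns the vanishing of the bracket into
   w e^w = -(a/c) e^(-b - a/c).  Positive odds mean w < -a/c, and since
   -(a/c) e^(-a/c) lies below the right-hand side this forces w <= -1, i.e. the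
   branch W_(-1).  Likewise, with v = 1 + c lam / (1 - lam),
   f1' = 1 - ln v + (c - 1)/v vanishes iff t = ln v - 1 >= -1 solves
   t e^t = (c - 1)/e, i.e. t = W_0((c - 1)/e).  Finally f1 is concave with
   f1 0 = b > 0: beyond its crossing with the line lam CSR it stays below the
   line, so min (lam CSR) (f1 lam) peaks at the crossing or at the maximiser of
   f1, whichever comes later. *)

From Stdlib Require Import Reals Lra ClassicalEpsilon.
From Coquelicot Require Import Coquelicot.
Open Scope R_scope.

Lemma derive_xexp x : derivable_pt_lim (fun w => w * exp w) x ((1 + x) * exp x).
Proof. apply is_derive_Reals. auto_derive; [exact I | ring]. Qed.

Lemma xexp_increasing u w : -1 <= u -> u < w -> u * exp u < w * exp w.
Proof.
  intros Hu Huw.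
  destruct (MVT_cor2 (fun w => w * exp w) (fun x => (1 + x) * exp x) u w Huw
              (fun x _ => derive_xexp x)) as [x [Hmvt Hx]].
  assert (0 < (1 + x) * exp x * (w - u)).
  { apply Rmult_lt_0_compat; [apply Rmult_lt_0_compat; [lra | apply exp_pos] | lra]. }
  lra.
Qed.

Lemma xexp_decreasing u w : w <= -1 -> u < w -> w * exp w < u * exp u.
Proof.
  intros Hw Huw.
  destruct (MVT_cor2 (fun w => w * exp w) (fun x => (1 + x) * exp x) u w Huw
              (fun x _ => derive_xexp x)) as [x [Hmvt Hx]].
  assert (0 < - (1 + x) * exp x * (w - u)).
  { apply Rmult_lt_0_compat; [apply Rmult_lt_0_compat; [lra | apply exp_pos] | lra]. }
  lra.
Qed.

Lemma xexp_m1 : -1 * exp (-1) = - / exp 1.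
Proof. replace (-1) with (- (1)) by ring. rewrite exp_Ropp. ring. Qed.

Lemma xexp_ge w : - / exp 1 <= w * exp w.
Proof.
  rewrite <- xexp_m1.
  destruct (Rtotal_order w (-1)) as [H | [-> | H]].
  - left. apply xexp_decreasing; lra.
  - lra.
  - left. apply xexp_increasing; lra.
Qed.

Lemma xexp_ivt u w z :
  u <= w -> (u * exp u - z) * (w * exp w - z) <= 0 ->
  exists x, u <= x <= w /\ x * exp x = z.
Proof.
  intros Huw Hsign.
  assert (Hcont : continuity (fun x => x * exp x - z)).
  { intros x. apply continuity_pt_minus; [| apply continuity_pt_const; now intros ? ?].
    apply derivable_continuous_pt. exists ((1 + x) * exp x). apply derive_xexp. }
  destruct (IVT_cor _ u w Hcont Huw Hsign) as [x [Hx Hz]].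
  exists x. split; [exact Hx | lra].
Qed.

Lemma sqr_lt_4exp x : 0 <= x -> x * x < 4 * exp x.
Proof.
  intros Hx.
  assert (Hsplit : exp x = exp (x / 2) * exp (x / 2)) by (rewrite <- exp_plus; f_equal; field).
  pose proof (exp_ineq1_le (x / 2)).
  rewrite Hsplit. nra.
Qed.

Lemma W0_spec z : - / exp 1 <= z -> -1 <= W0 z /\ W0 z * exp (W0 z) = z.
Proof.
  intros Hz. unfold W0. apply epsilon_spec.
  set (M := Rabs z + 1).
  assert (HM : z <= M * exp M).
  { pose proof (exp_ineq1_le M). pose proof (Rle_abs z). pose proof (Rabs_pos z).
    unfold M in *. nra. }
  destruct (xexp_ivt (-1) M z) as [w [Hw Hwz]].
  - pose proof (Rabs_pos z). unfold M. lra.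
  - rewrite xexp_m1. nra.
  - exists w. split; [lra | exact Hwz].
Qed.

Lemma Wm1_spec z : - / exp 1 <= z -> z < 0 -> Wm1 z <= -1 /\ Wm1 z * exp (Wm1 z) = z.
Proof.
  intros Hz Hz0. unfold Wm1. apply epsilon_spec.
  (* K e^{-K} <= -z as soon as K >= 4 / (-z), because K^2 < 4 e^K. *)
  set (K := 4 / - z + 1).
  assert (HzK : (- z) * K = 4 + - z) by (unfold K; field; lra).
  assert (HK : 1 <= K).
  { assert (0 < 4 / - z) by (apply Rdiv_lt_0_compat; lra). unfold K. lra. }
  assert (HKz : z <= - K * exp (- K)).
  { pose proof (sqr_lt_4exp K ltac:(lra)). pose proof (exp_pos K).
    rewrite exp_Ropp.
    assert (K <= - z * exp K) by nra.
    apply Rmult_le_reg_r with (exp K); [lra|].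
    rewrite Rmult_assoc, Rinv_l by lra. nra. }
  destruct (xexp_ivt (- K) (-1) z) as [w [Hw Hwz]].
  - lra.
  - rewrite xexp_m1. nra.
  - exists w. split; [lra | exact Hwz].
Qed.

Lemma W0_unique z w : -1 <= w -> w * exp w = z -> w = W0 z.
Proof.
  intros Hw Hwz.
  assert (Hz : - / exp 1 <= z) by (rewrite <- Hwz; apply xexp_ge).
  destruct (W0_spec z Hz) as [H0 H0z].
  destruct (Rtotal_order w (W0 z)) as [L | [L | L]]; [| exact L |].
  - pose proof (xexp_increasing _ _ Hw L). lra.
  - pose proof (xexp_increasing _ _ H0 L). lra.
Qed.

Lemma Wm1_unique z w : z < 0 -> w <= -1 -> w * exp w = z -> w = Wm1 z.
Proof.
  intros Hz0 Hw Hwz.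
  assert (Hz : - / exp 1 <= z) by (rewrite <- Hwz; apply xexp_ge).
  destruct (Wm1_spec z Hz Hz0) as [H1 H1z].
  destruct (Rtotal_order w (Wm1 z)) as [L | [L | L]]; [| exact L |].
  - pose proof (xexp_decreasing _ _ H1 L). lra.
  - pose proof (xexp_decreasing _ _ Hw L). lra.
Qed.

Lemma Wm1_lt u z : u * exp u < z -> z < 0 -> Wm1 z < u.
Proof.
  intros Huz Hz0.
  assert (Hz : - / exp 1 <= z) by (pose proof (xexp_ge u); lra).
  destruct (Wm1_spec z Hz Hz0) as [H1 H1z].
  destruct (Rlt_le_dec (Wm1 z) u) as [L | [L | L]]; [exact L | | ].
  - pose proof (xexp_decreasing _ _ H1 L). lra.
  - subst u. lra.
Qed.

Lemma Wm1_unique_left u z w :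
  u * exp u < z -> z < 0 -> w < u -> w * exp w = z -> w = Wm1 z.
Proof.
  intros Huz Hz0 Hwu Hwz. apply Wm1_unique; [exact Hz0 | | exact Hwz].
  destruct (Rle_lt_dec w (-1)) as [L | L]; [exact L |].
  pose proof (xexp_increasing _ _ (Rlt_le _ _ L) Hwu). lra.
Qed.

Lemma ln_le_sub1 x : 0 < x -> ln x <= x - 1.
Proof. intros Hx. pose proof (exp_ineq1_le (ln x)). rewrite exp_ln in H; lra. Qed.

Definition relay_gain (c lam : R) := 1 + c * lam / (1 - lam).

Definition df1 (c lam : R) := 1 - ln (relay_gain c lam) + (c - 1) / relay_gain c lam.

Lemma relay_gain_ge1 c lam : 0 < c -> 0 <= lam < 1 -> 1 <= relay_gain c lam.
Proof.
  intros Hc Hlam. unfold relay_gain.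
  assert (0 <= c * lam / (1 - lam)) by (apply Rmult_le_pos; [nra | left; apply Rinv_0_lt_compat; lra]).
  lra.
Qed.

Lemma relay_gain_mul c lam : lam < 1 -> (1 - lam) * relay_gain c lam = 1 + (c - 1) * lam.
Proof. intros H. unfold relay_gain. field. lra. Qed.

Lemma f1_relay_gain b c lam : lam < 1 -> f1 b c lam = b + (1 - lam) * ln (relay_gain c lam).
Proof. intros H. unfold f1, relay_gain. ring. Qed.

Lemma f1_0 b c : f1 b c 0 = b.
Proof. unfold f1. rewrite Rmult_0_r, Rdiv_0_l, Rplus_0_r, ln_1. ring. Qed.

Lemma derive_f1 b c lam : 0 < c -> 0 < lam < 1 -> derivable_pt_lim (f1 b c) lam (df1 c lam).
Proof.
  intros Hc Hlam.
  assert (Hpos : 0 < c * lam / (1 - lam)) by (apply Rdiv_lt_0_compat; nra).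
  apply is_derive_Reals. unfold f1, df1, relay_gain.
  auto_derive.
  - unfold Rdiv, Rminus in Hpos. lra.
  - set (L := ln (1 + c * lam / (1 - lam))).
    change (ln (1 + c * lam * / (1 + - lam))) with L.
    field. split; nra.
Qed.

(* Concavity of f1 as a tangent-line bound, from ln r <= r - 1; l = 0 is allowed. *)
Lemma f1_supergradient b c l m : 0 < c -> 0 <= l < 1 -> 0 < m < 1 ->
  f1 b c l <= f1 b c m + df1 c m * (l - m).
Proof.
  intros Hc Hl Hm.
  pose proof (relay_gain_ge1 c l Hc Hl). pose proof (relay_gain_ge1 c m Hc ltac:(lra)).
  set (r := relay_gain c l / relay_gain c m).
  assert (Hr : 0 < r) by (apply Rdiv_lt_0_compat; lra).
  assert (Hsplit : ln (relay_gain c l) = ln (relay_gain c m) + ln r).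
  { rewrite <- ln_mult by lra. f_equal. unfold r. field. lra. }
  assert (Hlin : (1 - l) * (r - 1) = (1 + (c - 1) / relay_gain c m) * (l - m)).
  { unfold r, relay_gain. field. split; [lra | split; nra]. }
  pose proof (ln_le_sub1 r Hr).
  rewrite !f1_relay_gain by lra. unfold df1. rewrite Hsplit.
  nra.
Qed.

Section SupergradientMaxMin.

Variables (f D : R -> R) (C : R).

Hypothesis supergradient :
  forall l m, 0 <= l < 1 -> 0 < m < 1 -> f l <= f m + D m * (l - m).

Lemma stationary_is_max m l : 0 < m < 1 -> D m = 0 -> 0 < l < 1 -> f l <= f m.
Proof.
  intros Hm HDm Hl. pose proof (supergradient l m ltac:(lra) Hm). nra.
Qed.

Lemma nonincreasing_right_of_stationary l2 m l :
  0 < l2 < 1 -> D l2 = 0 -> l2 <= m -> m <= l < 1 -> f l <= f m.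
Proof.
  intros Hl2 HD2 Hl2m Hml.
  assert (Hm : 0 < m < 1) by lra.
  assert (HDm : D m <= 0).
  { destruct Hl2m as [Hlt | <-]; [| lra].
    pose proof (stationary_is_max l2 m Hl2 HD2 Hm).
    pose proof (supergradient l2 m ltac:(lra) Hm). nra. }
  pose proof (supergradient l m ltac:(lra) Hm). nra.
Qed.

(* Since f 0 > 0, the line l C meets the concave f from below: past the
   crossing the slope of f is smaller than C. *)
Lemma below_line_right_of_crossing m l :
  0 < f 0 -> 0 < m < 1 -> m * C = f m -> m <= l < 1 -> f l <= l * C.
Proof.
  intros Hf0 Hm Hcross Hml.
  pose proof (supergradient 0 m ltac:(lra) Hm).
  assert (HDm : D m < C) by nra.
  pose proof (supergradient l m ltac:(lra) Hm). nra.
Qed.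

Lemma maxmin_at_Rmax_crossing_stationary l1 l2 :
  0 <= C -> 0 < f 0 ->
  0 < l1 < 1 -> l1 * C = f l1 -> 0 < l2 < 1 -> D l2 = 0 ->
  forall l, 0 < l < 1 ->
    Rmin (l * C) (f l) <= Rmin (Rmax l1 l2 * C) (f (Rmax l1 l2)).
Proof.
  intros HC Hf0 Hl1 Hcross Hl2 HD2 l Hl.
  unfold Rmax. destruct (Rle_dec l1 l2) as [H12 | H21].
  - rewrite (Rmin_right _ _ (below_line_right_of_crossing l1 l2 Hf0 Hl1 Hcross ltac:(lra))).
    eapply Rle_trans; [apply Rmin_r |]. exact (stationary_is_max l2 l Hl2 HD2 Hl).
  - rewrite (Rmin_left (l1 * C)) by lra.
    destruct (Rle_lt_dec l l1) as [Hll1 | Hl1l].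
    + eapply Rle_trans; [apply Rmin_l |]. nra.
    + eapply Rle_trans; [apply Rmin_r |]. rewrite Hcross.
      apply (nonincreasing_right_of_stationary l2); lra.
Qed.

End SupergradientMaxMin.

Definition stationary_point (c : R) :=
  let V := exp (W0 ((c - 1) / exp 1) + 1) in (V - 1) / (V + c - 1).

Lemma relay_gain_inv c lam :
  0 < c -> 0 <= lam < 1 -> lam = (relay_gain c lam - 1) / (relay_gain c lam + c - 1).
Proof.
  intros Hc Hlam.
  pose proof (relay_gain_ge1 c lam Hc Hlam). pose proof (relay_gain_mul c lam ltac:(lra)).
  apply Rmult_eq_reg_r with (relay_gain c lam + c - 1); [| lra].
  field_simplify; lra.
Qed.

Lemma df1_zero_iff c lam : 0 < c -> 0 <= lam < 1 ->
  df1 c lam = 0 <->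
  (ln (relay_gain c lam) - 1) * exp (ln (relay_gain c lam) - 1) = (c - 1) / exp 1.
Proof.
  intros Hc Hlam. pose proof (relay_gain_ge1 c lam Hc Hlam) as Hv.
  pose proof (exp_pos 1) as He.
  assert (Hexp : exp (ln (relay_gain c lam) - 1) = relay_gain c lam / exp 1).
  { unfold Rminus. rewrite exp_plus, exp_ln, exp_Ropp by lra. reflexivity. }
  assert (Hscale : df1 c lam * (relay_gain c lam / exp 1)
                   = (c - 1) / exp 1
                     - (ln (relay_gain c lam) - 1) * exp (ln (relay_gain c lam) - 1)).
  { rewrite Hexp. unfold df1. field. lra. }
  split; intros H.
  - rewrite H, Rmult_0_l in Hscale. lra.
  - assert (Hprod : df1 c lam * (relay_gain c lam / exp 1) = 0) by lra.
    apply Rmult_integral in Hprod as [Hd | Hd]; [exact Hd |].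
    assert (0 < relay_gain c lam / exp 1) by (apply Rdiv_lt_0_compat; lra). lra.
Qed.

Lemma stationary_point_spec b c : 0 < c ->
  0 < stationary_point c < 1 /\
  derivable_pt_lim (f1 b c) (stationary_point c) 0 /\
  (forall lam, 0 < lam < 1 -> derivable_pt_lim (f1 b c) lam 0 -> lam = stationary_point c).
Proof.
  intros Hc. pose proof (exp_pos 1) as He.
  set (q := (c - 1) / exp 1).
  assert (Hq : - / exp 1 <= q).
  { pose proof (Rinv_0_lt_compat _ He). unfold q, Rdiv. nra. }
  destruct (W0_spec q Hq) as [Ht Htq].
  set (t := W0 q) in Ht, Htq.
  set (V := exp (t + 1)).
  assert (Ht1 : -1 < t).
  { destruct Ht as [Ht | Ht]; [exact Ht |].
    rewrite <- Ht, xexp_m1 in Htq. unfold q, Rdiv in Htq.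
    assert (c * / exp 1 = 0) by lra.
    pose proof (Rinv_0_lt_compat _ He). nra. }
  assert (HV : 1 < V) by (rewrite <- exp_0; apply exp_increasing; lra).
  assert (Hsp : stationary_point c = (V - 1) / (V + c - 1)) by reflexivity.
  assert (Hbounds : 0 < stationary_point c < 1).
  { rewrite Hsp. split; [apply Rdiv_lt_0_compat; lra |].
    apply Rmult_lt_reg_r with (V + c - 1); [lra |].
    unfold Rdiv. rewrite Rmult_assoc, Rinv_l; lra. }
  assert (Hgain : relay_gain c (stationary_point c) = V).
  { rewrite Hsp. unfold relay_gain. field. lra. }
  assert (HD : df1 c (stationary_point c) = 0).
  { apply df1_zero_iff; [exact Hc | lra |].
    rewrite Hgain. unfold V. rewrite ln_exp. replace (t + 1 - 1) with t by ring. exact Htq. }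
  split; [exact Hbounds | split].
  - rewrite <- HD. apply derive_f1; assumption.
  - intros lam Hlam Hd.
    pose proof (uniqueness_limite _ _ _ _ Hd (derive_f1 b c lam Hc Hlam)) as HD0.
    symmetry in HD0. apply df1_zero_iff in HD0; [| exact Hc | lra].
    pose proof (relay_gain_ge1 c lam Hc ltac:(lra)) as Hv.
    assert (Hln : 0 <= ln (relay_gain c lam)).
    { destruct Hv as [Hv | Hv].
      - left. rewrite <- ln_1. apply ln_increasing; lra.
      - rewrite <- Hv, ln_1. lra. }
    assert (Hw : ln (relay_gain c lam) - 1 = t) by (apply W0_unique; [lra | exact HD0]).
    assert (Hgl : relay_gain c lam = V).
    { unfold V. rewrite <- Hw. replace (ln (relay_gain c lam) - 1 + 1) with (ln (relay_gain c lam)) by ring.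
      rewrite exp_ln; lra. }
    rewrite (relay_gain_inv c lam Hc ltac:(lra)), Hgl. exact (eq_sym Hsp).
Qed.

Definition crossing_arg (a b c : R) := - (a / c) * exp (- b - a / c).

Definition crossing_odds (a b c : R) := - (1 / a) * Wm1 (crossing_arg a b c) - 1 / c.

Definition crossing_point (a b c : R) :=
  let w1 := Wm1 (crossing_arg a b c) in
  (- (1 / a) * w1 - 1 / c) / (1 - (1 / a) * w1 - 1 / c).

Definition rate_gap (a b c y : R) := a * y - b - ln (1 + c * y).

Lemma rate_gap_f1 a b c lam : lam < 1 ->
  lam * (a + b) - f1 b c lam = (1 - lam) * rate_gap a b c (lam / (1 - lam)).
Proof.
  intros H. rewrite f1_relay_gain by lra. unfold rate_gap, relay_gain.
  replace (c * (lam / (1 - lam))) with (c * lam / (1 - lam)) by (unfold Rdiv; ring).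
  field. lra.
Qed.

Section Crossing.

Variables a b c : R.
Hypotheses (Ha : 0 < a) (Hb : 0 < b) (Hc : 0 < c).

Lemma crossing_arg_bounds : - (a / c) * exp (- (a / c)) < crossing_arg a b c < 0.
Proof.
  assert (Hac : 0 < a / c) by (apply Rdiv_lt_0_compat; lra).
  assert (Hsplit : crossing_arg a b c = - (a / c) * exp (- (a / c)) * exp (- b)).
  { unfold crossing_arg. rewrite Rmult_assoc, <- exp_plus. f_equal. f_equal. ring. }
  assert (Hb1 : exp (- b) < 1) by (rewrite <- exp_0; apply exp_increasing; lra).
  assert (Hp : 0 < a / c * exp (- (a / c))) by (apply Rmult_lt_0_compat; [lra | apply exp_pos]).
  pose proof (exp_pos (- b)).
  rewrite Hsplit, Ropp_mult_distr_l_reverse. split; nra.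
Qed.

Lemma rate_gap_zero_iff y : 0 < 1 + c * y ->
  rate_gap a b c y = 0 <->
  - (a / c) * (1 + c * y) * exp (- (a / c) * (1 + c * y)) = crossing_arg a b c.
Proof.
  intros Hy.
  assert (Hac : - (a / c) <> 0) by (assert (0 < a / c) by (apply Rdiv_lt_0_compat; lra); lra).
  assert (Hw : - (a / c) * (1 + c * y) * exp (- (a / c) * (1 + c * y))
               = - (a / c) * exp (ln (1 + c * y) - a * y - a / c)).
  { unfold Rminus. rewrite !exp_plus, exp_ln by lra.
    replace (exp (- (a / c) * (1 + c * y))) with (exp (- (a * y)) * exp (- (a / c)))
      by (rewrite <- exp_plus; f_equal; field; lra).
    ring. }
  rewrite Hw. unfold crossing_arg, rate_gap. split; intros H.
  - do 2 f_equal. lra.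
  - apply Rmult_eq_reg_l, exp_inv in H; lra.
Qed.

Lemma crossing_odds_spec : 0 < crossing_odds a b c /\ rate_gap a b c (crossing_odds a b c) = 0.
Proof.
  destruct crossing_arg_bounds as [Hlow Hneg].
  pose proof (Wm1_lt _ _ Hlow Hneg) as Hw1.
  assert (Hz : - / exp 1 <= crossing_arg a b c) by (pose proof (xexp_ge (- (a / c))); lra).
  destruct (Wm1_spec _ Hz Hneg) as [_ Hw1z].
  set (w1 := Wm1 (crossing_arg a b c)) in Hw1, Hw1z.
  assert (Hodds : crossing_odds a b c = / a * (- w1 - a / c)) by (unfold crossing_odds; fold w1; field; lra).
  assert (Hpos : 0 < crossing_odds a b c)
    by (rewrite Hodds; apply Rmult_lt_0_compat; [apply Rinv_0_lt_compat |]; lra).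
  assert (Hgain : 1 + c * crossing_odds a b c = - (c / a) * w1) by (rewrite Hodds; field; lra).
  assert (0 < c / a) by (apply Rdiv_lt_0_compat; lra).
  split; [exact Hpos |].
  apply rate_gap_zero_iff; [nra |].
  replace (- (a / c) * (1 + c * crossing_odds a b c)) with w1 by (rewrite Hgain; field; lra).
  exact Hw1z.
Qed.

Lemma crossing_odds_unique y : 0 < y -> rate_gap a b c y = 0 -> y = crossing_odds a b c.
Proof.
  intros Hy Hgap.
  assert (Hcy : 0 < 1 + c * y) by nra.
  apply rate_gap_zero_iff in Hgap; [| exact Hcy].
  destruct crossing_arg_bounds as [Hlow Hneg].
  assert (Hlt : - (a / c) * (1 + c * y) < - (a / c)).
  { replace (- (a / c) * (1 + c * y)) with (- (a / c) - a * y) by (field; lra). nra. }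
  pose proof (Wm1_unique_left _ _ _ Hlow Hneg Hlt Hgap) as Hw.
  unfold crossing_odds. rewrite <- Hw. field. lra.
Qed.

Lemma crossing_point_spec :
  0 < crossing_point a b c < 1 /\
  crossing_point a b c * (a + b) = f1 b c (crossing_point a b c) /\
  (forall lam, 0 < lam < 1 -> lam * (a + b) = f1 b c lam -> lam = crossing_point a b c).
Proof.
  destruct crossing_odds_spec as [Hpos Hroot].
  set (y1 := crossing_odds a b c) in Hpos, Hroot.
  assert (Hpt : crossing_point a b c = y1 / (1 + y1)).
  { unfold crossing_point, y1, crossing_odds, crossing_arg. f_equal. ring. }
  assert (Hbounds : 0 < crossing_point a b c < 1).
  { rewrite Hpt. split; [apply Rdiv_lt_0_compat; lra |].
    apply Rmult_lt_reg_r with (1 + y1); [lra |].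
    unfold Rdiv. rewrite Rmult_assoc, Rinv_l; lra. }
  assert (Hodds : crossing_point a b c / (1 - crossing_point a b c) = y1)
    by (rewrite Hpt; field; lra).
  split; [exact Hbounds | split].
  - pose proof (rate_gap_f1 a b c (crossing_point a b c) ltac:(lra)) as Hgap.
    rewrite Hodds, Hroot, Rmult_0_r in Hgap. lra.
  - intros lam Hlam Heq.
    pose proof (rate_gap_f1 a b c lam ltac:(lra)) as Hgap.
    rewrite Heq, Rminus_diag in Hgap. symmetry in Hgap.
    apply Rmult_integral in Hgap as [H1 | Hgap]; [lra |].
    assert (Hy : 0 < lam / (1 - lam)) by (apply Rdiv_lt_0_compat; lra).
    pose proof (crossing_odds_unique _ Hy Hgap) as Hy1. fold y1 in Hy1.
    rewrite Hpt, <- Hy1. field. lra.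
Qed.

End Crossing.

Theorem theorem1
  (PS HSR HSD HRD sR2 sD2 eta : R)
  (hPS : 0 < PS) (hHSR : 0 < HSR) (hHSD : 0 < HSD) (hHRD : 0 < HRD)
  (hsR : 0 < sR2) (hsD : 0 < sD2) (heta0 : 0 < eta) (heta1 : eta <= 1) :
  let CSR := ln (1 + PS * HSR / sR2) in
  let CSD := ln (1 + PS * HSD / sD2) in
  let a := CSR - CSD in
  let b := CSD in
  let c := eta * HSR * HRD * PS / sD2 in
  0 < a ->
  let w1 := Wm1 (- (a / c) * exp (- b - a / c)) in
  let lam1 := (- (1 / a) * w1 - 1 / c) / (1 - (1 / a) * w1 - 1 / c) in
  let lam2 := (exp (W0 ((c - 1) / exp 1) + 1) - 1)
              / (exp (W0 ((c - 1) / exp 1) + 1) + c - 1) in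
  let lamstar := Rmax lam1 lam2 in
  (* (i) lam1 is the unique solution in (0,1) of lam * CSR = f1 lam *)
  (0 < lam1 < 1 /\ lam1 * CSR = f1 b c lam1 /\
   (forall lam, 0 < lam < 1 -> lam * CSR = f1 b c lam -> lam = lam1)) /\
  (* (ii) lam2 is the unique stationary point of f1 in (0,1) *)
  (0 < lam2 < 1 /\ derivable_pt_lim (f1 b c) lam2 0 /\
   (forall lam, 0 < lam < 1 -> derivable_pt_lim (f1 b c) lam 0 -> lam = lam2)) /\
  (* (iii) lamstar attains the max over (0,1) of min(lam CSR, f1 lam) *)
  (0 < lamstar < 1 /\
   forall lam, 0 < lam < 1 ->
     Rmin (lam * CSR) (f1 b c lam) <= Rmin (lamstar * CSR) (f1 b c lamstar)).
Proof.
  intros CSR CSD a b c Ha w1 lam1 lam2 lamstar.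
  assert (Hb : 0 < b).
  { unfold b, CSD. rewrite <- ln_1. apply ln_increasing; [lra |].
    assert (0 < PS * HSD / sD2) by (apply Rdiv_lt_0_compat; nra). lra. }
  assert (Hc : 0 < c).
  { unfold c. apply Rdiv_lt_0_compat; [repeat apply Rmult_lt_0_compat |]; lra. }
  replace CSR with (a + b) by (unfold a, b; ring).
  destruct (crossing_point_spec a b c Ha Hb Hc) as [Hl1 [Hcross Huniq1]].
  destruct (stationary_point_spec b c Hc) as [Hl2 [Hstat Huniq2]].
  assert (HD2 : df1 c lam2 = 0) by exact (uniqueness_limite _ _ _ _ (derive_f1 b c lam2 Hc Hl2) Hstat).
  split; [exact (conj Hl1 (conj Hcross Huniq1)) |].
  split; [exact (conj Hl2 (conj Hstat Huniq2)) |].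
  split.
  - unfold lamstar, Rmax. destruct (Rle_dec lam1 lam2); assumption.
  - apply (maxmin_at_Rmax_crossing_stationary (f1 b c) (df1 c));
      [intros; apply f1_supergradient; assumption | lra | rewrite f1_0; exact Hb
      | exact Hl1 | exact Hcross | exact Hl2 | exact HD2].
Qed.
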